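(* Let $G$ be a graph whose twin graph $G^*$ is isomorphic to a triangle with one pendant edge attached (so $G^*$ has two vertices of degree 2, one of degree 3 and one leaf), where one of the degree-2 vertices is of type (N), the other degree-2 vertex is of type (1K), the leaf is of type (1N), and moreover, if the degree-2 vertex of type (1K) is of type (K), then neither the leaf nor the degree-3 vertex is of type (N). Then $D(G)\neq n(G)-2$.
   Context: All graphs are finite and simple; $n(G)=|V(G)|$; $N_G(u)$ is the neighborhood of $u$. A distinguishing coloring of a graph $G$ is a (not necessarily proper) vertex coloring such that the only automorphism of $G$ mapping every vertex to a vertex of the same color is the identity; the distinguishing number $D(G)$ is the minimum number of colors in a distinguishing coloring of $G$. Two distinct vertices $u,v$ are twins if $N_G(u)\setminus\{v\}=N_G(v)\setminus\{u\}$. The relation $u\equiv v$ iff $u=v$ or $u,v$ are twins is an equivalence relation; the class of $v$ is denoted $v^*$. The twin graph $G^*$ has the equivalence classes as vertices, distinct classes $u^*,v^*$ being adjacent iff $uv\in E(G)$. Each class induces a complete or an edgeless graph. A class $v^*$ is of type (1) if $|v^*|=1$, of type (K) if $|v^*|\ge 2$ and it induces a complete graph, and of type (N) if $|v^*|\ge2$ and it induces an edgeless graph; type (1K) means type (1) or (K), type (1N) means (1) or (N), and type (KN) means (K) or (N). *)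

From mathcomp Require Import all_boot all_fingroup.
Set Implicit Arguments. Unset Strict Implicit. Unset Printing Implicit Defensive.

(* A simple graph on a finite vertex type T is given by a relation e : rel T,
   assumed symmetric and irreflexive (hypotheses in the theorem). *)
Section Graphs.
Variables (T : finType) (e : rel T).

Definition nbhd (u : T) : {set T} := [set w | e u w].

Definition is_autb (s : {perm T}) : bool :=
  [forall x, forall y, e (s x) (s y) == e x y].

Definition dist_colb (k : nat) (c : {ffun T -> 'I_k}) : bool :=
  [forall s : {perm T}, (is_autb s && [forall x, c (s x) == c x]) ==> (s == 1%g)].

Definition has_dist_col (k : nat) : bool :=
  [exists c : {ffun T -> 'I_k}, dist_colb c].

Lemma has_dist_col_card : has_dist_col #|T|.
Proof.
apply/existsP; exists [ffun x => enum_rank x].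
apply/forallP => s; apply/implyP => /andP [_ /forallP Hc].
apply/eqP/permP => x; rewrite perm1.
by move: (Hc x); rewrite !ffunE => /eqP /enum_rank_inj.
Qed.

Lemma has_dist_col_ex : exists k, has_dist_col k.
Proof. by exists #|T|; exact: has_dist_col_card. Qed.

Definition dist_number : nat := ex_minn has_dist_col_ex.

Definition twins (u v : T) : bool :=
  (u != v) && (nbhd u :\ v == nbhd v :\ u).

Definition twin_class (v : T) : {set T} := [set u | (u == v) || twins u v].

Definition twin_classes : {set {set T}} := [set twin_class v | v : T].

Definition class_adj (A B : {set T}) : bool :=
  (A != B) && [exists u in A, exists v in B, e u v].

Definition type1 (A : {set T}) : bool := #|A| == 1.
Definition typeK (A : {set T}) : bool :=
  (2 <= #|A|) && [forall u in A, forall v in A, (u != v) ==> e u v].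
Definition typeN (A : {set T}) : bool :=
  (2 <= #|A|) && [forall u in A, forall v in A, ~~ e u v].

End Graphs.

From mathcomp Require Import all_boot all_fingroup.
Set Implicit Arguments. Unset Strict Implicit. Unset Printing Implicit Defensive.

(* Pick a in A, c in C, l in L and two non-adjacent b1, b2 in B.  Colour
   b1 and l with 0, a, b2 and c with 1, and the remaining n(G) - 5 vertices with
   pairwise distinct further colours.  A colour-preserving automorphism fixes the
   remaining vertices, and on the five chosen ones the adjacencies a ~ l, c ~ b1
   against b2, c ≁ l and b2 ≁ b1 force it to be the identity. *)

Section TwinClasses.
Variables (T : finType) (e : rel T).
Hypotheses (e_sym : symmetric e) (e_irr : irreflexive e).

(* The relation u ≡ v of the paper (equal or twins), phrased edgewise. *)
Definition twin_eq (u v : T) : bool :=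
  [forall z, (z != u) && (z != v) ==> (e u z == e v z)].

Lemma twin_eq_edge u v z : twin_eq u v -> z != u -> z != v -> e u z = e v z.
Proof. by move=> /forallP/(_ z)/implyP H zu zv; apply/eqP/H/andP. Qed.

Lemma twin_eq_refl u : twin_eq u u.
Proof. by apply/forall_inP. Qed.

Lemma twin_eq_sym u v : twin_eq u v -> twin_eq v u.
Proof.
move=> tuv; apply/forall_inP => z /andP[zv zu].
by rewrite (twin_eq_edge tuv zu zv).
Qed.

Lemma twin_eq_trans u v w : twin_eq u v -> twin_eq v w -> twin_eq u w.
Proof.
move=> tuv tvw; apply/forall_inP => z /andP[zu zw].
have [<-|uw] := eqVneq u w; first by [].
have [zv|zv] := eqVneq z v; last by rewrite (twin_eq_edge tuv) ?(twin_eq_edge tvw).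
(* for [z = v] both twin relations are evaluated at the third vertex *)
subst z; have uv : u != v by rewrite eq_sym.
have wv : w != v by rewrite eq_sym.
apply/eqP; rewrite e_sym (twin_eq_edge tvw) //.
by rewrite e_sym (twin_eq_edge tuv) 1?eq_sym // e_sym.
Qed.

Lemma in_twin_class x u : (u \in twin_class e x) = twin_eq u x.
Proof.
rewrite inE; have [->|ux] /= := eqVneq u x; first by rewrite twin_eq_refl.
rewrite /twins ux; apply/eqP/forall_inP.
  move=> /setP nbhdE z /andP[zu zx].
  by have := nbhdE z; rewrite !inE zu zx /= => ->.
move=> tux; apply/setP => z; rewrite !inE.
have [->|zx] := eqVneq z x; first by rewrite e_irr andbF.
have [->|zu] := eqVneq z u; first by rewrite e_irr andbF.
by rewrite /= (eqP (tux z _)) ?zu ?zx.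
Qed.

Lemma twin_classes_twin_eq X u v :
  X \in twin_classes e -> u \in X -> v \in X -> twin_eq u v.
Proof.
move=> /imsetP[x _ ->]; rewrite !in_twin_class => tux tvx.
exact: twin_eq_trans tux (twin_eq_sym tvx).
Qed.

Lemma twin_classes_witness X : X \in twin_classes e -> exists x, x \in X.
Proof. by move=> /imsetP[x _ ->]; exists x; rewrite inE eqxx. Qed.

Lemma twin_classes_eq X Y u :
  X \in twin_classes e -> Y \in twin_classes e -> u \in X -> u \in Y -> X = Y.
Proof.
move=> /imsetP[x _ ->] /imsetP[y _ ->]; rewrite !in_twin_class => tux tuy.
have txy := twin_eq_trans (twin_eq_sym tux) tuy.
apply/setP => w; rewrite !in_twin_class; apply/idP/idP => tw.
  exact: twin_eq_trans tw txy.
exact: twin_eq_trans tw (twin_eq_sym txy).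
Qed.

Lemma twin_classes_vertex_neq X Y u v :
  X \in twin_classes e -> Y \in twin_classes e -> X != Y ->
  u \in X -> v \in Y -> u != v.
Proof.
move=> HX HY XY uX vY; apply: contraNneq XY => uv.
by apply/eqP; apply: twin_classes_eq HX HY uX _; rewrite uv.
Qed.

Lemma class_adj_edge X Y u v :
  X \in twin_classes e -> Y \in twin_classes e -> class_adj e X Y ->
  u \in X -> v \in Y -> e u v.
Proof.
move=> HX HY /andP[XY /exists_inP[u0 u0X /exists_inP[v0 v0Y e0]]] uX vY.
have neq := twin_classes_vertex_neq HX HY XY.
rewrite -(twin_eq_edge (twin_classes_twin_eq HX u0X uX)) 1?eq_sym ?neq //.
by rewrite e_sym -(twin_eq_edge (twin_classes_twin_eq HY v0Y vY)) 1?e_sym ?neq.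
Qed.

Lemma not_class_adj_edge X Y u v :
  X != Y -> ~~ class_adj e X Y -> u \in X -> v \in Y -> ~~ e u v.
Proof.
move=> XY nXY uX vY; apply: contra nXY => euv.
by rewrite /class_adj XY; apply/exists_inP; exists u => //; apply/exists_inP; exists v.
Qed.

End TwinClasses.

Section FreshColouring.
Variables (T : finType) (e : rel T).

Lemma is_autb_edge (s : {perm T}) : is_autb e s -> forall x y, e (s x) (s y) = e x y.
Proof. by move=> aut x y; apply/eqP/(forallP (forallP aut x)). Qed.

Lemma dist_number_le k : has_dist_col e k -> dist_number e <= k.
Proof. by rewrite /dist_number; case: ex_minnP => m _; apply. Qed.

Definition fresh_colouring (W : {set T}) (f : T -> nat) (k : nat) (x : T) : nat :=
  if x \in W then f x else k + index x (enum (~: W)).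

Lemma dist_number_le_fresh (W : {set T}) (f : T -> nat) (k : nat) :
  {in W, forall x, f x < k} ->
  (forall s : {perm T}, is_autb e s ->
     {in W, forall x, s x \in W /\ f (s x) = f x} -> {in W, forall x, s x = x}) ->
  dist_number e <= k + #|~: W|.
Proof.
move=> f_lt rigid; pose col := fresh_colouring W f k.
have col_lt x : col x < k + #|~: W|.
  rewrite /col /fresh_colouring; case: ifPn => xW.
    exact: leq_trans (f_lt x xW) (leq_addr _ _).
  by rewrite ltn_add2l cardE index_mem mem_enum inE.
have col_geq x : (k <= col x) = (x \notin W).
  rewrite /col /fresh_colouring; case: ifPn => xW; last by rewrite leq_addr.
  by rewrite leqNgt f_lt.
apply/dist_number_le/existsP; exists [ffun x => Ordinal (col_lt x)].
apply/forallP => s; apply/implyP => /andP[aut /forallP same_col].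
have {}same_col x : col (s x) = col x.
  by have /eqP/(congr1 val) := same_col x; rewrite !ffunE.
have sW x : (s x \in W) = (x \in W).
  by apply: negb_inj; rewrite -!col_geq same_col.
have fixW := rigid s aut.
apply/eqP/permP => x; rewrite perm1; have [xW|xW] := boolP (x \in W).
  apply: fixW => // y yW; rewrite sW; split=> //.
  by have := same_col y; rewrite /col /fresh_colouring sW yW.
have xV : x \in enum (~: W) by rewrite mem_enum inE.
have sxV : s x \in enum (~: W) by rewrite mem_enum inE sW.
apply: (index_inj x sxV xV); apply/eqP; rewrite -(eqn_add2l k).
by have := same_col x; rewrite /col /fresh_colouring sW (negbTE xW) => ->.
Qed.

End FreshColouring.

Section BlownUpPaw.
Variables (T : finType) (e : rel T).
Hypotheses (e_sym : symmetric e) (e_irr : irreflexive e).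
Variables a b1 b2 c l : T.
Hypotheses (e_ab1 : e a b1) (e_al : e a l) (e_cb1 : e c b1) (e_cb2 : e c b2).
Hypotheses (ne_b1b2 : ~~ e b1 b2) (ne_b1l : ~~ e b1 l).
Hypotheses (ne_b2l : ~~ e b2 l) (ne_cl : ~~ e c l).
Hypothesis b1_neq_b2 : b1 != b2.

Let neq_of_edge x y z : e x z -> ~~ e y z -> x != y.
Proof. by move=> exz; apply: contraNneq => <-. Qed.

Let edge_neq x y : e x y -> x != y.
Proof. by move=> exy; apply: contraTneq exy => ->; rewrite e_irr. Qed.

Let a_neq_b2 : a != b2. Proof. exact: neq_of_edge e_al ne_b2l. Qed.
Let a_neq_c : a != c. Proof. exact: neq_of_edge e_al ne_cl. Qed.
Let b2_neq_c : b2 != c. Proof. by rewrite eq_sym edge_neq. Qed.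
Let b1_neq_l : b1 != l. Proof. by apply: (@neq_of_edge _ _ c); rewrite e_sym. Qed.
Let l_neq_b2 : l != b2.
Proof. by rewrite eq_sym; apply: (@neq_of_edge _ _ c); rewrite e_sym. Qed.
Let l_neq_c : l != c.
Proof. by rewrite eq_sym; apply: (@neq_of_edge _ _ b1); rewrite // e_sym. Qed.
Let b1_neq_a : b1 != a. Proof. by rewrite eq_sym edge_neq. Qed.
Let b1_neq_c : b1 != c. Proof. by rewrite eq_sym edge_neq. Qed.
Let l_neq_a : l != a. Proof. by rewrite eq_sym edge_neq. Qed.

Lemma paw_uniq : uniq [:: b1; l; a; b2; c].
Proof.
by rewrite /= !inE !negb_or b1_neq_l b1_neq_a b1_neq_b2 b1_neq_c l_neq_a l_neq_b2 l_neq_c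
  a_neq_b2 a_neq_c b2_neq_c.
Qed.

Lemma paw_parts_disjoint x : x \in [set b1; l] -> x \notin [set a; b2; c].
Proof.
case/set2P=> ->; rewrite !inE !negb_or.
  by rewrite b1_neq_a b1_neq_b2 b1_neq_c.
by rewrite l_neq_a l_neq_b2 l_neq_c.
Qed.

Definition paw_support : {set T} := [set b1; l] :|: [set a; b2; c].

Definition paw_colour (x : T) : nat := x \in [set a; b2; c].

Lemma paw_colour_lt2 x : paw_colour x < 2.
Proof. by rewrite /paw_colour; case: (_ \in _). Qed.

Lemma paw_support_card : #|paw_support| = 5.
Proof.
rewrite -[5]/(size [:: b1; l; a; b2; c]) -(card_uniqP paw_uniq).
by apply: eq_card => x; rewrite !inE !orbA.
Qed.

Lemma paw_rigid (s : {perm T}) : is_autb e s ->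
  s b1 \in [set b1; l] -> s l \in [set b1; l] ->
  s a \in [set a; b2; c] -> s b2 \in [set a; b2; c] -> s c \in [set a; b2; c] ->
  [/\ s a = a, s b1 = b1, s b2 = b2, s c = c & s l = l].
Proof.
move=> aut /set2P hb1 /set2P hl; rewrite !inE -!orbA => ha hb2 hc.
have sE := is_autb_edge aut; have s_inj := @perm_inj _ s.
(* one of [s b1], [s l] is [l] *)
have e_sal : e (s a) l.
  case: hb1 => [sb1 | <-]; last by rewrite sE.
  case: hl => [slb1 | <-]; last by rewrite sE.
  by move: b1_neq_l; rewrite -(inj_eq s_inj) sb1 slb1 eqxx.
have sa : s a = a.
  by case/or3P: ha => /eqP sa //; rewrite sa ?(negbTE ne_b2l) ?(negbTE ne_cl) in e_sal.
have sc_neq_a : s c != a by rewrite -sa (inj_eq s_inj) eq_sym.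
have sb1 : s b1 = b1.
  case: hb1 => // sb1l; have : e (s c) l by rewrite -sb1l sE.
  by move: sc_neq_a; case/or3P: hc => /eqP ->; rewrite ?eqxx ?(negbTE ne_b2l) ?(negbTE ne_cl).
have sl : s l = l.
  case: hl => // slb1.
  by move: b1_neq_l; rewrite -(inj_eq s_inj) sb1 slb1 eqxx.
have sc : s c = c.
  have : e (s c) b1 by rewrite -sb1 sE.
  by move: sc_neq_a; case/or3P: hc => /eqP ->; rewrite ?eqxx // e_sym (negbTE ne_b1b2).
have sb2 : s b2 = b2.
  case/or3P: hb2 => /eqP sb2 //.
    by move: a_neq_b2; rewrite -(inj_eq s_inj) sa sb2 eqxx.
  by move: b2_neq_c; rewrite -(inj_eq s_inj) sc sb2 eqxx.
by [].
Qed.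

Lemma paw_colour_rigid (s : {perm T}) : is_autb e s ->
  {in paw_support, forall x, s x \in paw_support /\ paw_colour (s x) = paw_colour x} ->
  {in paw_support, forall x, s x = x}.
Proof.
move=> aut pres.
have sR x : x \in [set a; b2; c] -> s x \in [set a; b2; c].
  move=> xR; have [_] := pres x (introT setUP (or_intror xR)).
  by rewrite /paw_colour xR; case: (_ \in _).
have sS x : x \in [set b1; l] -> s x \in [set b1; l].
  move=> xS; have [/setUP[] // sxR] := pres x (introT setUP (or_introl xS)).
  by rewrite /paw_colour sxR (negbTE (paw_parts_disjoint xS)).
have [] := paw_rigid aut (sS b1 _) (sS l _) (sR a _) (sR b2 _) (sR c _);
  rewrite ?inE ?eqxx ?orbT // => sa sb1 sb2 sc sl x.
by case/setUP=> [/set2P[]-> | ]; rewrite // !inE -orbA => /or3P[]/eqP->.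
Qed.

End BlownUpPaw.

Theorem lemma4p7 (T : finType) (e : rel T)
  (e_sym : symmetric e) (e_irr : irreflexive e)
  (A B C L : {set T}) :
  A \in twin_classes e -> B \in twin_classes e ->
  C \in twin_classes e -> L \in twin_classes e ->
  twin_classes e = [set A; B; C; L] ->
  uniq [:: A; B; C; L] ->
  class_adj e A B -> class_adj e A C -> class_adj e A L ->
  class_adj e B C -> ~~ class_adj e B L -> ~~ class_adj e C L ->
  typeN e B ->
  type1 C || typeK e C ->
  type1 L || typeN e L ->
  (typeK e C -> ~~ typeN e L /\ ~~ typeN e A) ->
  dist_number e <> #|T| - 2.
Proof.
move=> HA HB HC HL _ classes_uniq AB AC AL BC nBL nCL.
move=> /andP[/card_gt1P[b1 [b2 [b1B b2B b1_neq_b2]]] /forall_inP B_indep] _ _ _.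
move: classes_uniq; rewrite /= !inE !negb_or => /and3P[_ /andP[_ B_neq_L] /andP[C_neq_L _]].
have [a aA] := twin_classes_witness HA.
have [c cC] := twin_classes_witness HC.
have [l lL] := twin_classes_witness HL.
have edge := class_adj_edge e_sym e_irr.
have e_ab1 := edge _ _ _ _ HA HB AB aA b1B.
have e_al := edge _ _ _ _ HA HL AL aA lL.
have e_cb1 : e c b1 by rewrite e_sym (edge _ _ _ _ HB HC BC b1B cC).
have e_cb2 : e c b2 by rewrite e_sym (edge _ _ _ _ HB HC BC b2B cC).
have ne_b1b2 := forall_inP (B_indep b1 b1B) b2 b2B.
have ne_b1l := not_class_adj_edge B_neq_L nBL b1B lL.
have ne_b2l := not_class_adj_edge B_neq_L nBL b2B lL.
have ne_cl := not_class_adj_edge C_neq_L nCL cC lL.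
have paw_card :=
  paw_support_card e_sym e_irr e_ab1 e_al e_cb1 e_cb2 ne_b1l ne_b2l ne_cl b1_neq_b2.
have := dist_number_le_fresh (fun x _ => paw_colour_lt2 a b2 c x)
  (paw_colour_rigid e_sym e_irr e_ab1 e_al e_cb1 e_cb2 ne_b1b2 ne_b1l ne_b2l ne_cl b1_neq_b2).
have := cardsC (paw_support a b1 b2 c l).
rewrite paw_card => <- /[swap] ->.
by rewrite [5 + _]addnC -addnBA // [2 + _]addnC leq_add2l.
Qed.
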